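(* Let $r\ge 1$ be an integer. The order of a $[1,r;4]$-mixed cage is $2(r+2)$. Moreover, a mixed graph $H$ is a $[1,r;4]$-mixed cage if and only if it is obtained from the complete bipartite graph $K_{r+2,r+2}$ by choosing a $2$-factor $F$ of $K_{r+2,r+2}$, orienting every cycle of $F$ as a directed cycle (these become the arcs of $H$), and keeping all remaining edges of $K_{r+2,r+2}$ as undirected edges.
   Context: A mixed graph is a finite simple graph that may contain both edges and arcs. A $[z,r;g]$-mixed graph is a mixed graph in which every vertex is the tail of exactly $z$ arcs, the head of exactly $z$ arcs, and is incident with exactly $r$ edges, and whose girth is $g$. Walks traverse edges in either direction and arcs only in their direction; a cycle is a closed walk with no repeated vertices (other than start = end) and no repeated edge or arc; the girth is the length of a shortest cycle. A $[z,r;g]$-mixed cage is a $[z,r;g]$-mixed graph of minimum order. *)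

From mathcomp Require Import all_boot.
Set Implicit Arguments. Unset Strict Implicit. Unset Printing Implicit Defensive.

(* A (finite, simple) mixed graph on vertex type V:
   e x y  : there is an (undirected) edge between x and y,
   a x y  : there is an arc with tail x and head y. *)
Definition mixed_graph (V : finType) (e a : rel V) : Prop :=
  symmetric e /\ irreflexive e /\ irreflexive a /\
  (forall x y, a x y -> ~~ a y x /\ ~~ e x y).

Definition mstep (V : finType) (e a : rel V) : rel V :=
  fun x y => e x y || a x y.

(* In a simple mixed graph
   every cycle has length >= 3 (length 1 = loop, length 2 would need two
   distinct elements joining the same pair). *)
Definition mcycle (V : finType) (e a : rel V) (s : seq V) : bool :=
  [&& 2 < size s, uniq s & cycle (mstep e a) s].

Definition has_girth (V : finType) (e a : rel V) (g : nat) : Prop :=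
  (exists s, mcycle e a s /\ size s = g) /\
  (forall s, mcycle e a s -> g <= size s).

Definition zrg_mixed_graph (z r g : nat) (V : finType) (e a : rel V) : Prop :=
  mixed_graph e a /\
  (forall x : V, #|[set y | a x y]| = z /\ #|[set y | a y x]| = z /\
                 #|[set y | e x y]| = r) /\
  has_girth e a g.

Definition mixed_cage (z r g : nat) (V : finType) (e a : rel V) : Prop :=
  zrg_mixed_graph z r g e a /\
  (forall (W : finType) (e' a' : rel W), zrg_mixed_graph z r g e' a' ->
     #|V| <= #|W|).

Definition Kvert (n : nat) : finType := (bool * 'I_n)%type.
Definition Kedge (n : nat) : rel (Kvert n) := fun x y => x.1 != y.1.

Definition two_factor (n : nat) (F : rel (Kvert n)) : Prop :=
  symmetric F /\ (forall x y, F x y -> Kedge x y) /\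
  (forall x, #|[set y | F x y]| = 2).

Definition directed_cycle_orientation (n : nat) (F A : rel (Kvert n)) : Prop :=
  (forall x y, F x y = A x y || A y x) /\
  (forall x y, ~~ (A x y && A y x)) /\
  (forall x, #|[set y | A x y]| = 1 /\ #|[set y | A y x]| = 1).

Definition from_K_edges (n : nat) (F : rel (Kvert n)) : rel (Kvert n) :=
  fun x y => Kedge x y && ~~ F x y.

Definition mixed_iso (V W : finType) (e a : rel V) (e' a' : rel W) : Prop :=
  exists f : V -> W, bijective f /\
    (forall x y, e' (f x) (f y) = e x y) /\
    (forall x y, a' (f x) (f y) = a x y).

From mathcomp Require Import all_boot.
Set Implicit Arguments. Unset Strict Implicit. Unset Printing Implicit Defensive.

(* Forgetting the directions of the arcs of a [1,r;4]-mixed graph gives a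
   simple graph that is (r+2)-regular and triangle-free: a triangle which is
   a mixed 3-cycle in neither direction contains two arcs with a common tail
   or a common head.  Adjacent vertices of a triangle-free k-regular graph
   have disjoint neighbourhoods, so it has at least 2k vertices, and with
   exactly 2k vertices it is K_{k,k}; the arcs then form a 2-factor with every
   vertex of in- and out-degree one.  Conversely such an orientation of a
   2-factor of K_{r+2,r+2} yields a [1,r;4]-mixed graph of order 2(r+2): it
   has no 3-cycle because K_{r+2,r+2} is bipartite. *)

Lemma cards1_eq (T : finType) (P : pred T) u v :
  #|[set y | P y]| = 1 -> P u -> P v -> u = v.
Proof.
move/eqP/cards1P => [w Pw] Pu Pv.
have : u \in [set y | P y] by rewrite inE.
have : v \in [set y | P y] by rewrite inE.
by rewrite Pw !inE => /eqP -> /eqP ->.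
Qed.

Lemma cardsU_disjoint (T : finType) (A B : {set T}) :
  (forall y, y \in A -> y \in B -> False) -> #|A :|: B| = #|A| + #|B|.
Proof.
move=> AB; rewrite cardsU.
suff -> : A :&: B = set0 by rewrite cards0 subn0.
by apply/setP => y; rewrite !inE; apply/negbTE/negP => /andP [/AB].
Qed.

Lemma card_preimset_bij (T T' : finType) (f : T -> T') (P : pred T') :
  bijective f -> #|[set x | P (f x)]| = #|[set y | P y]|.
Proof.
move=> fb; rewrite -(on_card_preimset (onW_bij _ fb)).
by apply: eq_card => x; rewrite !inE.
Qed.

Lemma two_factor_of_orientation n (A : rel (Kvert n)) :
  (forall x y, A x y -> Kedge x y) -> (forall x y, ~~ (A x y && A y x)) ->
  (forall x, #|[set y | A x y]| = 1 /\ #|[set y | A y x]| = 1) ->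
  two_factor (fun x y => A x y || A y x) /\
  directed_cycle_orientation (fun x y => A x y || A y x) A.
Proof.
move=> AK Aanti Adeg; do !split => //.
- by move=> x y; rewrite orbC.
- by move=> x y /orP [/AK // | /AK]; rewrite /Kedge eq_sym.
- move=> x; have [out1 in1] := Adeg x.
  have -> : [set y | A x y || A y x] = [set y | A x y] :|: [set y | A y x].
    by apply/setP => y; rewrite !inE.
  rewrite cardsU_disjoint ?out1 ?in1 // => y; rewrite !inE => xy yx.
  by have := Aanti x y; rewrite xy yx.
Qed.

Section TriangleFreeRegular.
Variables (T : finType) (adj : rel T) (k : nat).
Hypothesis adj_sym : symmetric adj.
Hypothesis adj_regular : forall x, #|[set y | adj x y]| = k.
Hypothesis triangle_free : forall x y z, adj x y -> adj y z -> adj z x -> False.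

Lemma triangle_free_card_ge x y : adj x y -> 2 * k <= #|T|.
Proof.
move=> xy; apply: leq_trans (max_card (mem ([set z | adj x z] :|: [set z | adj y z]))).
rewrite cardsU_disjoint ?adj_regular ?mul2n ?addnn // => z; rewrite !inE => xz yz.
by apply: (triangle_free xy yz); rewrite adj_sym.
Qed.

Hypothesis card_T : #|T| = 2 * k.

Lemma nbhd_adj_setC x u : adj x u -> [set v | adj u v] = ~: [set v | adj x v].
Proof.
move=> xu; apply/eqP; rewrite eqEcard cardsCs setCK !adj_regular card_T.
rewrite mul2n -addnn addnK leqnn andbT.
apply/subsetP => v; rewrite !inE => uv; apply/negP => xv.
by apply: (triangle_free xu uv); rewrite adj_sym.
Qed.

Lemma adj_bipartite x u v : 0 < k -> adj u v = (adj x u != adj x v).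
Proof.
move=> k_gt0.
have nbhdC w z : adj x w -> adj w z = ~~ adj x z.
  by move=> xw; rewrite -[LHS]in_set (nbhd_adj_setC xw) !inE.
case xu: (adj x u); case xv: (adj x v) => /=.
- by rewrite nbhdC // xv.
- by rewrite nbhdC // xv.
- by rewrite adj_sym nbhdC // xu.
- apply/negbTE/negP => uv.
  have [w] : exists w, w \in [set y | adj x y] by apply/card_gt0P; rewrite adj_regular.
  rewrite inE => xw.
  have wu : adj w u by rewrite nbhdC // xu.
  have wv : adj w v by rewrite nbhdC // xv.
  by apply: (triangle_free uv _ wu); rewrite adj_sym.
Qed.

Lemma complete_bipartite_iso : 0 < k ->
  exists g : Kvert k -> T, bijective g /\ forall p q, adj (g p) (g q) = Kedge p q.
Proof.
move=> k_gt0.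
have [x _] : exists x : T, x \in predT by apply/card_gt0P; rewrite card_T muln_gt0.
pose side b := [set v | adj x v == b].
have card_side b : #|side b| = k.
  have card_true : #|side true| = k.
    by rewrite -(adj_regular x); apply: eq_card => v; rewrite !inE eqb_id.
  case: b => //; rewrite cardsCs -card_true card_T.
  have -> : ~: side false = side true by apply/setP => v; rewrite !inE eqbF_neg negbK.
  by rewrite card_true mul2n -addnn addnK.
pose g (p : Kvert k) : T := enum_val (cast_ord (esym (card_side p.1)) p.2).
have g_side p : adj x (g p) = p.1.
  by have := enum_valP (cast_ord (esym (card_side p.1)) p.2); rewrite inE => /eqP.
have g_inj : injective g.
  move=> [b i] [c j] gbc.
  have bc : b = c by move: (g_side (b, i)) (g_side (c, j)); rewrite /= gbc => <- <-.
  by subst c; move/enum_val_inj/cast_ord_inj: gbc => /= ->.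
exists g; split.
  by apply: inj_card_bij g_inj _; rewrite card_T card_prod card_bool card_ord.
by move=> p q; rewrite (adj_bipartite x) // !g_side.
Qed.

End TriangleFreeRegular.

Lemma mcycle_map (V W : finType) (e a : rel V) (e' a' : rel W) (f : V -> W) :
  injective f -> (forall x y, e' (f x) (f y) = e x y) ->
  (forall x y, a' (f x) (f y) = a x y) ->
  forall s, mcycle e' a' (map f s) = mcycle e a s.
Proof.
move=> f_inj fe fa s; rewrite /mcycle size_map map_inj_uniq //.
by rewrite (@mono_cycle _ _ f (mstep e a)) // => x y; rewrite /mstep fe fa.
Qed.

Lemma zrg_mixed_graph_iso (V W : finType) (e a : rel V) (e' a' : rel W) z r g :
  mixed_iso e a e' a' -> zrg_mixed_graph z r g e' a' -> zrg_mixed_graph z r g e a.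
Proof.
case=> f [fb [fe fa]] [[e'_sym [e'_irr [a'_irr a'_simple]]] [deg [[s [cs size_s]] girth]]].
have f_inj := bij_inj fb; have [f' ff' f'f] := fb.
have mcycleE := mcycle_map f_inj fe fa.
split; [|split].
- split; [|split; [|split]].
  + by move=> x y; rewrite -!fe e'_sym.
  + by move=> x; rewrite -fe e'_irr.
  + by move=> x; rewrite -fa a'_irr.
  + by move=> x y; rewrite -!fa -fe; apply: a'_simple.
- move=> x; have [dout [din dedge]] := deg (f x).
  split; [rewrite -dout | split; [rewrite -din | rewrite -dedge]];
    rewrite -(card_preimset_bij _ fb); apply: eq_card => y; by rewrite !inE (fa, fe).
- split => [|t ct]; last by rewrite -(size_map f); apply: girth; rewrite mcycleE.
  by exists (map f' s); rewrite size_map -mcycleE -map_comp (eq_map f'f) map_id.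
Qed.

Definition underlying (V : finType) (e a : rel V) : rel V :=
  fun x y => [|| e x y, a x y | a y x].

Section UnderlyingGraph.
Variables (V : finType) (e a : rel V) (r : nat).
Hypothesis G : zrg_mixed_graph 1 r 4 e a.

Local Notation adj := (underlying e a).

Lemma edge_sym : symmetric e.
Proof. by case: G => [[]]. Qed.

Lemma arc_simple x y : a x y -> ~~ a y x /\ ~~ e x y.
Proof. by case: G => [[_ [_ [_ simple]]] _]; apply: simple. Qed.

Lemma out_degree x : #|[set y | a x y]| = 1.
Proof. by case: G => _ [/(_ x) []]. Qed.

Lemma in_degree x : #|[set y | a y x]| = 1.
Proof. by case: G => _ [/(_ x) [_ []]]. Qed.

Lemma edge_degree x : #|[set y | e x y]| = r.
Proof. by case: G => _ [/(_ x) [_ []]]. Qed.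

Lemma mcycle_size_ge4 s : mcycle e a s -> 4 <= size s.
Proof. by case: G => _ [_ [_]]; apply. Qed.

Lemma underlying_sym : symmetric adj.
Proof. by move=> x y; rewrite /underlying edge_sym (orbC (a x y)). Qed.

Lemma underlying_irr x : adj x x = false.
Proof. by case: G => [[_ [e_irr [a_irr _]]] _]; rewrite /underlying e_irr a_irr. Qed.

Lemma underlying_regular x : #|[set y | adj x y]| = r + 2.
Proof.
have -> : [set y | adj x y] = [set y | e x y] :|: ([set y | a x y] :|: [set y | a y x]).
  by apply/setP => y; rewrite !inE.
rewrite !cardsU_disjoint ?edge_degree ?out_degree ?in_degree // => y; rewrite !inE.
- by move=> xy /arc_simple [/negP].
- by move=> xy /orP [] /arc_simple [_ /negP]; rewrite // edge_sym.
Qed.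

Lemma edge_underlying x y : e x y = adj x y && ~~ (a x y || a y x).
Proof.
rewrite /underlying; case exy: (e x y) => /=.
  apply/esym/norP; split; apply/negP => /arc_simple [_].
    by rewrite exy.
  by rewrite edge_sym exy.
by case: (_ || _).
Qed.

(* An arc u -> v forbids the three arcs that would orient the triangle u v w
   the other way: v -> u by simplicity, w -> v by in-degree 1 and u -> w by
   out-degree 1. *)
Lemma arc_triangle u v w : v != w -> w != u -> a u v -> ~~ [|| a v u, a w v | a u w].
Proof.
move=> vw wu uv; have [vu _] := arc_simple uv.
rewrite (negbTE vu) /=; apply/norP; split; apply/negP.
  by move=> wv; move: wu; rewrite (cards1_eq (in_degree v) uv wv) eqxx.
by move=> uw; move: vw; rewrite (cards1_eq (out_degree u) uv uw) eqxx.
Qed.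

Lemma underlying_triangle_free x y z : adj x y -> adj y z -> adj z x -> False.
Proof.
have neq u v : adj u v -> u != v.
  by move=> uv; apply/eqP => uv_eq; rewrite uv_eq underlying_irr in uv.
have reverse_arc u v w : adj u v -> adj v w -> adj w u -> [|| a v u, a w v | a u w].
  move=> uv vw wu; have /negP : ~ mcycle e a [:: u; v; w] by move/mcycle_size_ge4.
  rewrite /mcycle /= !inE negb_or (neq _ _ uv) (neq _ _ vw) eq_sym (neq _ _ wu) /= andbT.
  have adj_mstep p q : adj p q -> mstep e a p q || a q p by rewrite /underlying /mstep orbA.
  move: (adj_mstep _ _ uv) (adj_mstep _ _ vw) (adj_mstep _ _ wu).
  by case/orP => ->; case/orP => ->; case/orP => ->; rewrite ?orbT.
move=> xy yz zx; have yx : adj y x by rewrite underlying_sym.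
have zy : adj z y by rewrite underlying_sym.
have xz : adj x z by rewrite underlying_sym.
move: (reverse_arc _ _ _ xy yz zx).
case/or3P: (reverse_arc _ _ _ xz zy yx) => arc;
  [ move: (arc_triangle (neq _ _ xy) (neq _ _ yz) arc)
  | move: (arc_triangle (neq _ _ zx) (neq _ _ xy) arc)
  | move: (arc_triangle (neq _ _ yz) (neq _ _ zx) arc) ];
  by case: (a y x); case: (a z y); case: (a x z).
Qed.

Lemma underlying_edge : exists x y, adj x y.
Proof.
case: G => _ [_ [[[|x s] [_ _]] _]] //.
have [y] : exists y, y \in [set y | a x y] by apply/card_gt0P; rewrite out_degree.
by rewrite inE => xy; exists x, y; rewrite /underlying xy orbT.
Qed.

Lemma mixed_graph_card_ge : 2 * (r + 2) <= #|V|.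
Proof.
have [x [y xy]] := underlying_edge.
exact (triangle_free_card_ge underlying_sym underlying_regular underlying_triangle_free xy).
Qed.

Lemma extremal_mixed_graph_structure : #|V| = 2 * (r + 2) ->
  exists F A : rel (Kvert (r + 2)),
    [/\ two_factor F, directed_cycle_orientation F A & mixed_iso e a (from_K_edges F) A].
Proof.
move=> card_V.
have r2_gt0 : 0 < r + 2 by rewrite addn2.
have [g [g_bij g_adj]] := complete_bipartite_iso underlying_sym underlying_regular
  underlying_triangle_free card_V r2_gt0.
pose A p q := a (g p) (g q).
have [two_factorF orientA] : two_factor (fun p q => A p q || A q p) /\
    directed_cycle_orientation (fun p q => A p q || A q p) A.
  apply: two_factor_of_orientation.
  - by move=> p q; rewrite -g_adj /underlying /A => ->; rewrite orbT.
  - by move=> p q; apply/andP => -[/arc_simple [/negP]].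
  - by move=> p; rewrite /A (card_preimset_bij (a (g p)) g_bij)
      (card_preimset_bij (a^~ (g p)) g_bij) out_degree in_degree.
exists (fun p q => A p q || A q p), A; split => //.
have [g' gK g'K] := g_bij; exists g'; split; first by exists g.
split => x y; last by rewrite /A !g'K.
by rewrite /from_K_edges -g_adj /A !g'K edge_underlying.
Qed.

End UnderlyingGraph.

Lemma card_Kedge n (x : Kvert n) : #|[set y | Kedge x y]| = n.
Proof.
have -> : [set y | Kedge x y] = setX [set ~~ x.1] [set: 'I_n].
  by apply/setP => -[b i]; rewrite !inE /Kedge /= andbT; case: (x.1); case: b.
by rewrite cardsX cards1 cardsT card_ord mul1n.
Qed.

Lemma Kedge_neq n (x y : Kvert n) : Kedge x y -> x != y.
Proof. by apply: contraTneq => ->; rewrite /Kedge eqxx. Qed.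

Lemma Kedge_triangle_free n (x y z : Kvert n) :
  Kedge x y -> Kedge y z -> Kedge z x -> False.
Proof. by rewrite /Kedge; case: x y z => [[] ?] [[] ?] [[] ?]. Qed.

Section Model.
Variables (n : nat) (F A : rel (Kvert n)).
Hypotheses (F_factor : two_factor F) (A_orient : directed_cycle_orientation F A).

Local Notation E := (from_K_edges F).

Lemma factorE x y : F x y = A x y || A y x.
Proof. by case: A_orient. Qed.

Lemma arc_antisym x y : ~~ (A x y && A y x).
Proof. by case: A_orient => _ []. Qed.

Lemma arc_out_degree x : #|[set y | A x y]| = 1.
Proof. by case: A_orient => _ [_ /(_ x) []]. Qed.

Lemma arc_in_degree x : #|[set y | A y x]| = 1.
Proof. by case: A_orient => _ [_ /(_ x) []]. Qed.

Lemma arc_Kedge x y : A x y -> Kedge x y.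
Proof. by case: F_factor => _ [F_K _] xy; apply: F_K; rewrite factorE xy. Qed.

Lemma model_mixed_graph : mixed_graph E A.
Proof.
split; [|split; [|split]].
- by move=> x y; rewrite /from_K_edges /Kedge [y.1 == _]eq_sym !factorE orbC.
- by move=> x; rewrite /from_K_edges /Kedge eqxx.
- by move=> x; apply/negP => /arc_Kedge /Kedge_neq; rewrite eqxx.
- move=> x y xy; split; first by have := arc_antisym x y; rewrite xy.
  by rewrite /from_K_edges factorE xy andbF.
Qed.

Lemma card_model_edges x : #|[set y | E x y]| = n - 2.
Proof.
case: F_factor => _ [F_K F_deg].
have -> : [set y | E x y] = [set y | Kedge x y] :\: [set y | F x y].
  by apply/setP => y; rewrite !inE andbC.
rewrite cardsD card_Kedge; congr (_ - _).
rewrite -(F_deg x) (setIidPr _) //; apply/subsetP => y.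
by rewrite !inE; apply: F_K.
Qed.

Lemma model_mstep_Kedge x y : mstep E A x y -> Kedge x y.
Proof. by case/orP => [/andP [] | /arc_Kedge]. Qed.

Lemma Kedge_model_mstep x y : Kedge x y -> ~~ A y x -> mstep E A x y.
Proof.
move=> xy /negbTE yx; rewrite /mstep /from_K_edges factorE xy yx orbF.
by case: (A x y).
Qed.

Lemma model_girth : 1 < n -> has_girth E A 4.
Proof.
move=> n_gt1; split; last first.
  case=> [|p [|q [|t [|u s]]]] // /andP [_ /andP [_ /=]].
  case/and4P => /model_mstep_Kedge pq /model_mstep_Kedge qt /model_mstep_Kedge tp _.
  by case: (Kedge_triangle_free pq qt tp).
(* The 4-cycle x -> y -> w, z, x uses two consecutive arcs and any vertex
   z != y adjacent to x in K_{n,n}. *)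
pose x : Kvert n := (false, Ordinal (ltnW n_gt1)).
have [y] : exists y, y \in [set y | A x y] by apply/card_gt0P; rewrite arc_out_degree.
rewrite inE => xy.
have [w] : exists w, w \in [set w | A y w] by apply/card_gt0P; rewrite arc_out_degree.
rewrite inE => yw.
have [z] : exists z, z \in [set z | Kedge x z] :\ y.
  apply/card_gt0P; have := card_Kedge x.
  by rewrite (cardsD1 y) inE (arc_Kedge xy) add1n => card_n; rewrite -ltnS card_n.
rewrite !inE => /andP [zy xz].
have wz : Kedge w z.
  move: (arc_Kedge xy) (arc_Kedge yw) xz; rewrite /Kedge.
  by case: (x.1) (y.1) (w.1) (z.1) => [] [] [] [].
have xw : x != w.
  by apply: contraTneq yw => <-; have := arc_antisym x y; rewrite xy.
have wz_step : mstep E A w z.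
  apply: Kedge_model_mstep wz _; apply: contraNN zy => zw.
  by rewrite (cards1_eq (arc_in_degree w) zw yw).
have zx_step : mstep E A z x.
  apply: Kedge_model_mstep; first by rewrite /Kedge eq_sym.
  by apply: contraNN zy => xz'; rewrite (cards1_eq (arc_out_degree x) xz' xy).
exists [:: x; y; w; z]; split => //.
rewrite /mcycle /= !inE !negb_or (Kedge_neq (arc_Kedge xy)) xw (Kedge_neq xz).
rewrite (Kedge_neq (arc_Kedge yw)) eq_sym zy (Kedge_neq wz) wz_step zx_step.
by rewrite /mstep xy yw !orbT.
Qed.

End Model.

Lemma model_zrg_mixed_graph r (F A : rel (Kvert (r + 2))) :
  two_factor F -> directed_cycle_orientation F A ->
  zrg_mixed_graph 1 r 4 (from_K_edges F) A.
Proof.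
move=> F_factor A_orient; have r2_gt1 : 1 < r + 2 by rewrite addn2.
split; first exact: model_mixed_graph.
split; last exact: model_girth.
move=> x; split; first exact: (arc_out_degree A_orient).
split; first exact: (arc_in_degree A_orient).
by rewrite (card_model_edges F_factor); apply: addnK.
Qed.

Lemma ordS_neq n (i : 'I_n) : 1 < n -> i != ordS i.
Proof.
move=> n_gt1; apply/eqP => /(congr1 val) /=.
have := ltn_ord i; rewrite leq_eqVlt => /orP [/eqP i1n | i1n].
  by rewrite i1n modnn => i0; move: n_gt1; rewrite -i1n i0.
by rewrite modn_small // => /eqP; rewrite eqn_leq ltnn andbF.
Qed.

(* The 2-factor is the Hamiltonian cycle (false, 0), (true, 0), (false, 1),
   (true, 1), ..., oriented in this order. *)
Lemma two_factor_exists n : 1 < n -> exists F A : rel (Kvert n),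
  two_factor F /\ directed_cycle_orientation F A.
Proof.
move=> n_gt1.
pose A (p q : Kvert n) := (p.1 != q.1) && (q.2 == if p.1 then ordS p.2 else p.2).
have arc_out p : #|[set q | A p q]| = 1.
  rewrite -(cards1 (~~ p.1, if p.1 then ordS p.2 else p.2)); apply: eq_card => -[b j].
  by rewrite !inE /A /= xpair_eqE; case: p => -[] i; case: b.
have arc_in q : #|[set p | A p q]| = 1.
  rewrite -(cards1 (~~ q.1, if q.1 then q.2 else ord_pred q.2)); apply: eq_card => -[b j].
  rewrite !inE /A /= xpair_eqE; case: q => -[] i; case: b => //=.
  by apply/eqP/eqP => [->|->]; rewrite ?ordSK ?ord_predK.
exists (fun p q => A p q || A q p), A; apply: two_factor_of_orientation => //.
- by move=> p q /andP [].
- move=> [[] i] [[] j]; apply/negP; rewrite /A //= => /andP [/eqP -> /eqP i_eq].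
  all: by move: (ordS_neq i n_gt1); rewrite -i_eq eqxx.
Qed.

Theorem theorem3 (r : nat) (hr : 1 <= r) :
  ((exists (V : finType) (e a : rel V), mixed_cage 1 r 4 e a) /\
   (forall (V : finType) (e a : rel V), mixed_cage 1 r 4 e a ->
      #|V| = 2 * (r + 2))) /\
  (forall (V : finType) (e a : rel V),
     mixed_cage 1 r 4 e a <->
     exists (F A : rel (Kvert (r + 2))),
       [/\ two_factor F, directed_cycle_orientation F A &
           mixed_iso e a (from_K_edges F) A]).
Proof.
have r2_gt1 : 1 < r + 2 by rewrite addn2.
have [F0 [A0 [F0_factor A0_orient]]] := two_factor_exists r2_gt1.
have card_K : #|Kvert (r + 2)| = 2 * (r + 2) by rewrite card_prod card_bool card_ord.
have model_cage (F A : rel (Kvert (r + 2))) : two_factor F ->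
    directed_cycle_orientation F A -> mixed_cage 1 r 4 (from_K_edges F) A.
  move=> F_factor A_orient; split; first exact: (model_zrg_mixed_graph F_factor A_orient).
  by move=> W e' a' G; rewrite card_K; apply: mixed_graph_card_ge G.
have cage_order (V : finType) (e a : rel V) : mixed_cage 1 r 4 e a -> #|V| = 2 * (r + 2).
  move=> [G minimal]; apply/eqP; rewrite eqn_leq (mixed_graph_card_ge G) andbT -card_K.
  exact: minimal (model_zrg_mixed_graph F0_factor A0_orient).
split; first split.
- by exists (Kvert (r + 2)), (from_K_edges F0), A0; apply: model_cage.
- exact: cage_order.
move=> V e a; split => [cage | [F [A [F_factor A_orient iso]]]].
  by case: (cage) => G _; apply: extremal_mixed_graph_structure G (cage_order _ _ _ cage).
have [G minimal] := model_cage F A F_factor A_orient.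
split; first exact: zrg_mixed_graph_iso iso G.
move=> W e' a' G'; case: iso => f [f_bij _]; rewrite (bij_eq_card f_bij).
exact: minimal G'.
Qed.
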